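(* Let $G$ be a group, $\mathcal{O}$ a conjugacy class of $G$, and $H$ a subgroup of $G$ such that $\mathcal{O}$ contains two distinct conjugacy classes $\mathcal{O}_1,\mathcal{O}_2$ of $H$. Assume there exist $r\in\mathcal{O}_1$ and $s\in\mathcal{O}_2$ such that $(rs)^2$ does not belong to the centralizer of $r$ in $G$. Then $\mathcal{O}$ is of type D.
   Context: A conjugacy class $\mathcal{O}$ of a group (regarded as a rack with $x\triangleright y=xyx^{-1}$) is of type D iff there exist $r,s\in\mathcal{O}$ with $(rs)^2\neq(sr)^2$ such that $r$ and $s$ are not conjugate in the subgroup $\langle r,s\rangle$. (In rack terms: a rack is of type D if it contains a subrack that is a disjoint union $R\sqcup S$ of two subracks with $r\triangleright(s\triangleright(r\triangleright s))\neq s$ for some $r\in R$, $s\in S$.) *)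

From HB Require Import structures.
From mathcomp Require Import all_boot.
Set Implicit Arguments. Unset Strict Implicit. Unset Printing Implicit Defensive.

(* Arbitrary (possibly infinite) groups: MathComp's [groupType] from monoid.v.
   Subsets of a group are Prop-valued predicates [G -> Prop].
   Conjugation: [x ^ y = y^-1 * x * y] (MathComp's conjg). *)
Local Open Scope group_scope.

Section Defs.
Variable G : groupType.

Definition is_subgroup (K : G -> Prop) : Prop :=
  [/\ K 1, (forall x y, K x -> K y -> K (x * y)) & (forall x, K x -> K x^-1)].

Definition gen2 (r s : G) : G -> Prop :=
  fun x => forall K, is_subgroup K -> K r -> K s -> K x.

Definition conj_in (K : G -> Prop) (x y : G) : Prop :=
  exists2 g, K g & y = x ^ g.

Definition is_conj_class (K : G -> Prop) (C : G -> Prop) : Prop :=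
  exists2 a, K a & forall x, C x <-> conj_in K a x.

Definition centralizer (r : G) : G -> Prop := fun x => commute r x.

(* type D for a conjugacy class O of G (group-theoretic characterization from the paper) *)
Definition type_D (O : G -> Prop) : Prop :=
  exists r s, [/\ O r, O s, (r * s) ^+ 2 <> (s * r) ^+ 2 & ~ conj_in (gen2 r s) r s].
End Defs.

(* If [r] and [s] were conjugate in [<r, s>], they would be conjugate in [H],
   which contains [<r, s>]; the two [H]-classes would then coincide.  And
   [r (rs)^2 = (rs)^2 r] is equivalent to [(rs)^2 = (sr)^2], because
   [r (sr)^n = (rs)^n r]. *)
From mathcomp Require Import all_boot.
Set Implicit Arguments. Unset Strict Implicit.
Local Open Scope group_scope.

Section TypeD.
Variable G : groupType.
Implicit Types (H K C : G -> Prop) (r s x y z : G).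

Lemma mulg_expg_shift r s n : r * (s * r) ^+ n = (r * s) ^+ n * r.
Proof.
elim: n => [|n IHn]; first by rewrite !expg0 mulg1 mul1g.
by rewrite !expgSr !mulgA -IHn.
Qed.

Lemma centralizer_expg2_mul r s :
  centralizer r ((r * s) ^+ 2) <-> (r * s) ^+ 2 = (s * r) ^+ 2.
Proof.
rewrite /centralizer /commute -mulg_expg_shift.
by split=> [/mulgI | ->].
Qed.

Lemma conj_in_sym H x y : is_subgroup H -> conj_in H x y -> conj_in H y x.
Proof.
by case=> _ _ HV [g Hg ->]; exists g^-1; [exact: HV | rewrite conjgK].
Qed.

Lemma conj_in_trans H x y z :
  is_subgroup H -> conj_in H x y -> conj_in H y z -> conj_in H x z.
Proof.
case=> _ HM _ [g Hg ->] [h Hh ->].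
by exists (g * h); [exact: HM | rewrite conjgM].
Qed.

Lemma conj_in_sub H K x y :
  (forall z, H z -> K z) -> conj_in H x y -> conj_in K x y.
Proof. by move=> sHK [g Hg ->]; exists g; first exact: sHK. Qed.

Lemma subgroup_conjg_closed H x y : is_subgroup H -> H x -> H y -> H (x ^ y).
Proof. by case=> _ HM HV Hx Hy; rewrite conjgE; apply: HM (HV _ Hy) (HM _ _ Hx Hy). Qed.

Lemma gen2_sub H r s : is_subgroup H -> H r -> H s -> forall x, gen2 r s x -> H x.
Proof. by move=> sH Hr Hs x; apply. Qed.

Lemma conj_class_mem H C x : is_subgroup H -> is_conj_class H C -> C x -> H x.
Proof.
move=> sH [a Ha defC] /defC [g Hg ->].
exact: subgroup_conjg_closed.
Qed.

Lemma conj_class_eq H (C1 C2 : G -> Prop) r s :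
  is_subgroup H -> is_conj_class H C1 -> is_conj_class H C2 ->
  C1 r -> C2 s -> conj_in H r s -> forall x, C1 x <-> C2 x.
Proof.
move=> sH [a1 _ defC1] [a2 _ defC2] /defC1 c1r /defC2 c2s crs.
have c12 : conj_in H a1 a2.
  exact: conj_in_trans sH c1r (conj_in_trans sH crs (conj_in_sym sH c2s)).
move=> x; split=> [/defC1 c1x | /defC2 c2x].
  by apply/defC2; exact: conj_in_trans sH (conj_in_sym sH c12) c1x.
by apply/defC1; exact: conj_in_trans sH c12 c2x.
Qed.

End TypeD.

Theorem lemma2p5 (G : groupType) (O : G -> Prop) (H : G -> Prop)
    (O1 O2 : G -> Prop) :
  is_conj_class (fun _ => True) O ->
  is_subgroup H ->
  is_conj_class H O1 -> is_conj_class H O2 ->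
  ~ (forall x, O1 x <-> O2 x) ->
  (forall x, O1 x -> O x) -> (forall x, O2 x -> O x) ->
  (exists r s, [/\ O1 r, O2 s & ~ centralizer r ((r * s) ^+ 2)]) ->
  type_D O.
Proof.
move=> _ sH cl1 cl2 neqO12 sO1 sO2 [r [s [O1r O2s ncr]]].
exists r, s; split; [exact: sO1 | exact: sO2 | |].
  by move/centralizer_expg2_mul.
move=> crs; apply: neqO12; apply: (conj_class_eq sH cl1 cl2 O1r O2s).
apply: conj_in_sub crs.
exact: gen2_sub sH (conj_class_mem sH cl1 O1r) (conj_class_mem sH cl2 O2s).
Qed.
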